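(* For integers $n\ge0$ and $0\le i\le n/2$ let $g(i,n)=\binom{2(n-i)}{n-i}^2\binom{n-i}{i}$. Let $p$ be an odd prime, $m,r$ positive integers, and $j$ an integer with $0\le j\le mp^{r-1}/2$. Then $$g(jp,mp^r)\equiv g(j,mp^{r-1})\pmod{p^r}.$$ *)

From mathcomp Require Import all_boot.
Definition g (i n : nat) : nat := 'C((n - i).*2, n - i) ^ 2 * 'C(n - i, i).

From mathcomp Require Import all_boot.
From mathcomp Require Import ring zify.

Set Implicit Arguments.
Unset Strict Implicit.
Unset Printing Implicit Defensive.

(* Let [F n] be the product of the integers in [1, n] prime to [p].  Then
   [(p a)! = p^a a! F(p a)], hence [C(p a, p b) F(p b) F(p (a - b)) = C(a, b) F(p a)],
   which turns [g(j p, p n)] times a unit [D] into [g(j, n)] times a unit [E].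
   As [F(q c) = F(q)^c] modulo [q = p^(t+1)], the units [D] and [E] agree modulo
   [p^(t+1)] as soon as [p^t] divides [j] and [n].  For [t] the [p]-adic valuation
   of [j], Legendre's formula finds a carry in every digit position between [t]
   and [r - 1] (as [p^(r-1)] divides [n]), so [p^(r-1-t)] divides [g(j, n)]; this
   factor lifts the congruence from [p^(t+1)] to [p^r]. *)

Definition pfree_fact (p n : nat) : nat := \prod_(1 <= k < n.+1 | ~~ (p %| k)) k.

Lemma pfree_fact0 p : pfree_fact p 0 = 1.
Proof. by rewrite /pfree_fact big_geq. Qed.

Lemma pfree_factS p n :
  pfree_fact p n.+1 = pfree_fact p n * (if p %| n.+1 then 1 else n.+1).
Proof.
rewrite /pfree_fact big_mkcond big_nat_recr //= -big_mkcond.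
by case: (p %| n.+1); rewrite ?muln1.
Qed.

Lemma coprime_pfree_fact p n : prime p -> coprime (pfree_fact p n) p.
Proof.
move=> pp; elim: n => [|n IH]; first by rewrite pfree_fact0 coprime1n.
rewrite pfree_factS coprimeMl IH; case: ifP => [_|pNn]; first exact: coprime1n.
by rewrite coprime_sym prime_coprime ?pNn.
Qed.

Lemma fact_pfree p n : 0 < p -> n`! = p ^ (n %/ p) * (n %/ p)`! * pfree_fact p n.
Proof.
move=> p0; elim: n => [|n IH]; first by rewrite div0n pfree_fact0.
rewrite factS pfree_factS divnS // IH; case: ifP => [pn|_]; last by rewrite add0n; ring.
have -> : n.+1 = p * (n %/ p).+1 by rewrite -[n.+1](divnK pn) divnS // pn mulnC.
by rewrite add1n factS expnS; ring.
Qed.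

Lemma bin_pmul_pfree p a b : 0 < p -> b <= a ->
  'C(p * a, p * b) * (pfree_fact p (p * b) * pfree_fact p (p * (a - b)))
  = 'C(a, b) * pfree_fact p (p * a).
Proof.
move=> p0 ba; have := bin_fact (leq_mul (leqnn p) ba).
rewrite -mulnBr !(@fact_pfree p (p * _) p0) !mulKn // => binp.
have powD : p ^ a = p ^ b * p ^ (a - b) by rewrite -expnD subnKC.
have unit_gt0 : 0 < p ^ a * (b`! * (a - b)`!).
  by rewrite !muln_gt0 expn_gt0 p0 !fact_gt0.
apply/eqP; rewrite -(eqn_pmul2l unit_gt0); apply/eqP.
transitivity ('C(p * a, p * b) * (p ^ b * b`! * pfree_fact p (p * b)
  * (p ^ (a - b) * (a - b)`! * pfree_fact p (p * (a - b))))).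
  by rewrite powD; ring.
by rewrite binp -(bin_fact ba) powD; ring.
Qed.

Lemma pfree_fact_mulD p q c k : p %| q ->
  pfree_fact p (q * c + k) = pfree_fact p (q * c) * pfree_fact p k %[mod q].
Proof.
move=> pq; elim: k => [|k IH]; first by rewrite addn0 pfree_fact0 muln1.
rewrite addnS !pfree_factS -addnS dvdn_addr ?dvdn_mulr // mulnA -modnMml IH modnMml.
by case: ifP => // _; rewrite -modnMmr -[in RHS]modnMmr [q * c]mulnC modnMDl.
Qed.

Lemma pfree_fact_mul p q c : p %| q -> pfree_fact p (q * c) = pfree_fact p q ^ c %[mod q].
Proof.
move=> pq; elim: c => [|c IH]; first by rewrite muln0 pfree_fact0.
by rewrite mulnS addnC pfree_fact_mulD // -modnMml IH modnMml expnS mulnC.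
Qed.

Lemma eq_modnM q a b a' b' : a = a' %[mod q] -> b = b' %[mod q] -> a * b = a' * b' %[mod q].
Proof. by move=> ha hb; rewrite -modnMm ha hb modnMm. Qed.

Lemma eq_modnX q k a a' : a = a' %[mod q] -> a ^ k = a' ^ k %[mod q].
Proof. by move=> ha; rewrite -modnXm ha modnXm. Qed.

Lemma eqn_modMr_coprime c d a b : coprime c d -> a * c = b * c %[mod d] -> a = b %[mod d].
Proof.
move=> cd; wlog ba : a b / b <= a => [wlog_le|].
  by case/orP: (leq_total b a) => [/wlog_le //|ab /esym /(wlog_le _ _ ab) ->].
move=> /eqP acbc; apply/eqP; move: acbc.
by rewrite !eqn_mod_dvd ?leq_mul2r ?ba ?orbT // -mulnBl Gauss_dvdl // coprime_sym.
Qed.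

Lemma eqn_mod_cofactor d q x y D E : x * D = y * E -> d %| y -> D = E %[mod q] ->
  coprime D (d * q) -> x = y %[mod d * q].
Proof.
move=> xyDE /dvdnP[h yE] DE cD; subst y; apply: (eqn_modMr_coprime cD).
by rewrite xyDE [h * d]mulnC -!mulnA -!muln_modr -modnMmr -DE modnMmr.
Qed.

Lemma pfree_fact_bin_congr p t N j : prime p -> j <= N -> p ^ t %| j -> p ^ t %| N ->
  pfree_fact p (p * N) ^ 4 * pfree_fact p (p * j) * pfree_fact p (p * (N - j))
  = pfree_fact p (p * N.*2) ^ 2 * pfree_fact p (p * N) %[mod p ^ t.+1].
Proof.
move=> pp jN /dvdnP[j' Ej] /dvdnP[N' EN]; subst j N; set q := p ^ t.+1.
have pq : p %| q by rewrite /q expnS dvdn_mulr.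
have scale c : p * (c * p ^ t) = q * c by rewrite /q expnS; ring.
rewrite -mulnBl doubleMl !scale.
have F_mul c := pfree_fact_mul c pq.
rewrite (eq_modnM (eq_modnM (eq_modnX 4 (F_mul N')) (F_mul j')) (F_mul (N' - j'))).
rewrite (eq_modnM (eq_modnX 2 (F_mul N'.*2)) (F_mul N')) -!expnM -!expnD.
have pt_gt0 : 0 < p ^ t by rewrite expn_gt0 prime_gt0.
have jN' : j' <= N' by rewrite -(leq_pmul2r pt_gt0).
by congr (_ ^ _ %% _); lia.
Qed.

Lemma logn_fact_upto p n B : prime p -> n < B ->
  logn p n`! = \sum_(1 <= k < B) n %/ p ^ k.
Proof.
move=> pp nB; rewrite logn_fact // [RHS](@big_cat_nat _ _ _ n.+1) // -[LHS]addn0.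
congr (_ + _); rewrite big_nat big1 // => k /andP[nk _]; apply: divn_small.
exact: leq_trans nk (ltnW (ltn_expl k (prime_gt1 pp))).
Qed.

Lemma logn_bin p n k B : prime p -> k <= n -> n < B ->
  logn p 'C(n, k) + \sum_(1 <= i < B) (k %/ p ^ i + (n - k) %/ p ^ i)
  = \sum_(1 <= i < B) n %/ p ^ i.
Proof.
move=> pp kn nB; have le_B m : m <= n -> m < B by move=> mn; exact: leq_ltn_trans mn nB.
rewrite big_split /= -!(@logn_fact_upto p _ B) ?le_B ?leq_subr //.
by rewrite -!lognM ?muln_gt0 ?bin_gt0 ?kn ?fact_gt0 // bin_fact.
Qed.

(* With [q = p^k], this bounds below the [k]-th summand of Legendre's formula
   for [C(2N, N) C(N, j)]. *)
Lemma divn_carry q N j : 0 < q -> j <= N ->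
  N %/ q + N %/ q + j %/ q + (N - j) %/ q + ((q %| N + j) && ~~ (q %| j))
  <= N.*2 %/ q + N %/ q.
Proof.
move=> q0 jN; rewrite /dvdn -addnn.
have := divnD N N q0; have := modnD N j q0.
have := divnD j (N - j) q0; have := modnD j (N - j) q0; rewrite subnKC //.
have := ltn_pmod N q0; have := ltn_pmod j q0; have := ltn_pmod (N - j) q0.
move: (N %% q) (j %% q) ((N - j) %% q) => a b c.
move: (N %/ q) (j %/ q) ((N - j) %/ q) ((N + j) %% q) ((N + N) %/ q) => x y z w u.
by case: leqP; case: leqP; case: leqP; case: eqP; case: eqP => /=; lia.
Qed.

Lemma sum_nat_between t r B : r < B -> r - t <= \sum_(1 <= k < B) (t < k <= r).
Proof.
move=> rB; case: (leqP r t) => [rt|tr]; first by rewrite (eqP rt).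
rewrite (@big_cat_nat _ _ _ t.+1) ?(ltn_trans tr) //=.
rewrite [X in _ + X](@big_cat_nat _ _ _ r.+1) //=; last exact: ltnW.
rewrite (@eq_big_nat _ _ _ t.+1 r.+1 _ (fun=> 1)) ?sum_nat_const_nat ?muln1 ?subSS.
  by rewrite addnCA leq_addr.
by move=> k /andP[tk kr]; rewrite tk -ltnS kr.
Qed.

Lemma dvdn_bin_central_bin p N j r t : prime p -> j <= N -> p ^ r %| N + j ->
  ~~ (p ^ t.+1 %| j) -> p ^ (r - t) %| 'C(N.*2, N) * 'C(N, j).
Proof.
move=> pp jN Njr jt.
have N2 : N <= N.*2 by rewrite -addnn leq_addr.
rewrite pfactor_dvdn // ?muln_gt0 ?bin_gt0 ?jN ?N2 // lognM ?bin_gt0 //.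
set B := (N.*2 + r).+1.
have N2B : N.*2 < B by rewrite ltnS leq_addr.
have rB : r < B by rewrite ltnS leq_addl.
have logn_bin2N := logn_bin pp N2 N2B.
rewrite -{2}addnn addnK in logn_bin2N.
have logn_binN := logn_bin pp jN (leq_ltn_trans N2 N2B).
have carry : \sum_(1 <= k < B) (N %/ p ^ k + N %/ p ^ k + j %/ p ^ k + (N - j) %/ p ^ k
      + (t < k <= r)) <= \sum_(1 <= k < B) (N.*2 %/ p ^ k + N %/ p ^ k).
  apply: leq_sum => k _; apply: leq_trans (divn_carry _ jN); last first.
    by rewrite expn_gt0 prime_gt0.
  rewrite leq_add2l; case: (boolP (t < k <= r)) => //= /andP[tk kr].
  rewrite lt0b (dvdn_trans (dvdn_exp2l p kr) Njr) /=.
  by apply: contra jt; apply: dvdn_trans (dvdn_exp2l p tk).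
have := sum_nat_between t rB.
rewrite !big_split /= in carry logn_binN logn_bin2N; lia.
Qed.

Lemma exists_valuation_split p n j r : prime p -> j.*2 <= n -> p ^ r %| n ->
  exists2 t, t <= r & [/\ p ^ t %| j, p ^ t %| n
    & p ^ (r - t) %| 'C((n - j).*2, n - j) * 'C(n - j, j)].
Proof.
move=> pp jn rn; have jnj : j <= n - j by lia.
have njj : n - j + j = n by lia.
have [rj|rNj] := boolP (p ^ r %| j); first by exists r; rewrite // subnn dvd1n.
have j0 : 0 < j by case: j rNj {jn jnj njj} => //; rewrite dvdn0.
have tr : logn p j < r by rewrite ltnNge -pfactor_dvdn.
exists (logn p j); first exact: ltnW.
split; first exact: pfactor_dvdnn.
  exact: dvdn_trans (dvdn_exp2l p (ltnW tr)) rn.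
by apply: dvdn_bin_central_bin; rewrite ?njj // pfactor_dvdn // ltnn.
Qed.

Lemma g_pmul_congr p n j s t : prime p -> j.*2 <= n -> p ^ t %| j -> p ^ t %| n ->
  p ^ s %| 'C((n - j).*2, n - j) * 'C(n - j, j) ->
  g (j * p) (p * n) = g j n %[mod p ^ (s + t.+1)].
Proof.
move=> pp jn tj tn sdiv; have p0 := prime_gt0 pp.
rewrite /g [j * p]mulnC -mulnBr doubleMr expnD.
have jN : j <= n - j by lia.
have tN : p ^ t %| n - j by exact: dvdn_sub.
move: (n - j) jN tN sdiv => N jN tN sdiv.
have N2 : N <= N.*2 by rewrite -addnn leq_addr.
have bin2N := bin_pmul_pfree p0 N2; rewrite -{2}addnn addnK in bin2N.
have binN := bin_pmul_pfree p0 jN.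
apply: (eqn_mod_cofactor _ _ (pfree_fact_bin_congr pp jN tj tN)).
- transitivity (('C(p * N.*2, p * N) * (pfree_fact p (p * N) * pfree_fact p (p * N))) ^ 2
    * ('C(p * N, p * j) * (pfree_fact p (p * j) * pfree_fact p (p * (N - j))))); first ring.
  by rewrite bin2N binN; ring.
- by rewrite -mulnn -mulnA dvdn_mull.
- by rewrite coprimeMr !coprimeMl !coprimeXr ?coprimeXl ?coprime_pfree_fact.
Qed.

Theorem mainTheorem15 (p m r j : nat) :
  prime p -> odd p -> 0 < m -> 0 < r -> j.*2 <= m * p ^ r.-1 ->
  g (j * p) (m * p ^ r) = g j (m * p ^ r.-1) %[mod p ^ r].
Proof.
move=> pp _ _; case: r => // r _ /= jn.
have [t tr [tj tn sdiv]] := exists_valuation_split pp jn (dvdn_mull m (dvdnn (p ^ r))).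
have -> : m * p ^ r.+1 = p * (m * p ^ r) by rewrite expnS mulnCA.
have -> : p ^ r.+1 = p ^ (r - t + t.+1) by rewrite addnS subnK.
exact: g_pmul_congr.
Qed.
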